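(* Let $t \geq 1$ be an integer and let $\mathcal{F} \neq \emptyset$ be a finite family of finite sets. Then $\beta(\mathcal{F},t) \geq \frac{1}{|\mathcal{F}|}$, and equality holds if and only if $|A \cap B| < t$ for any distinct $A$ and $B$ in $\mathcal{F}$.
   Context: A family $\mathcal{A}$ is $t$-intersecting if $|A \cap B| \geq t$ for all $A, B \in \mathcal{A}$ with $A \neq B$. $l(\mathcal{F},t)$ is the size of a largest $t$-intersecting sub-family of $\mathcal{F}$. For a family $\mathcal{A}$, $\mathcal{A}^{t,+} = \{A \in \mathcal{A} : |A \cap B| \geq t \text{ for all } B \in \mathcal{A}\setminus\{A\}\}$ and $\mathcal{A}^{t,-} = \mathcal{A} \setminus \mathcal{A}^{t,+}$. For $\mathcal{A} \subseteq \mathcal{F}$, $\beta(\mathcal{F},t,\mathcal{A}) = \frac{l(\mathcal{F},t) - |\mathcal{A}^{t,+}|}{|\mathcal{A}^{t,-}|}$ if $\mathcal{A}^{t,-} \neq \emptyset$, and $\frac{l(\mathcal{F},t)}{|\mathcal{F}|}$ if $\mathcal{A}^{t,-} = \emptyset$; $\beta(\mathcal{F},t) = \min\{\beta(\mathcal{F},t,\mathcal{A}) : \mathcal{A} \subseteq \mathcal{F}\}$. *)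

(* Ground set: a finType T (every finite family of finite
   sets lives in the finite universe given by its union). *)
From HB Require Import structures.
From mathcomp Require Import all_boot all_order all_algebra.
Set Implicit Arguments. Unset Strict Implicit. Unset Printing Implicit Defensive.
Import Order.TTheory GRing.Theory Num.Theory.
Local Open Scope ring_scope.

Section Defs.
Variable T : finType.

Definition t_intersecting (t : nat) (A : {set {set T}}) : bool :=
  [forall A1 in A, forall A2 in A, (A1 != A2) ==> (t <= #|A1 :&: A2|)%N].

Definition lmax (F : {set {set T}}) (t : nat) : nat :=
  \max_(A in powerset F | t_intersecting t A) #|A|.

Definition fam_plus (A : {set {set T}}) (t : nat) : {set {set T}} :=
  [set X in A | [forall B in A :\ X, (t <= #|X :&: B|)%N]].
Definition fam_minus (A : {set {set T}}) (t : nat) : {set {set T}} :=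
  A :\: fam_plus A t.

Definition beta_at (F : {set {set T}}) (t : nat) (A : {set {set T}}) : rat :=
  if fam_minus A t == set0 then (lmax F t)%:R / #|F|%:R
  else ((lmax F t)%:R - #|fam_plus A t|%:R) / #|fam_minus A t|%:R.

(* beta(F,t) = min over all subfamilies A ⊆ F (set0 ⊆ F seeds the fold) *)
Definition beta (F : {set {set T}}) (t : nat) : rat :=
  \big[Order.min/beta_at F t set0]_(A in powerset F) beta_at F t A.

End Defs.

(* Let l := l(F,t), which is at least 1 since singletons are t-intersecting.
   For any subfamily A and any Y in A, the family A^{t,+} ∪ {Y} is
   t-intersecting, so whenever A^{t,-} is nonempty, l - |A^{t,+}| >= 1 while
   |A^{t,-}| <= |F|; hence beta(F,t,A) >= 1/|F|, and equality forces
   A^{t,+} to be empty, A^{t,-} = F and l = 1.  Since beta(F,t,0) = l/|F|, the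
   minimum equals 1/|F| exactly when l = 1, i.e. when no two members of F
   meet in t elements. *)
From HB Require Import structures.
From mathcomp Require Import all_boot all_order all_algebra.
From mathcomp Require Import zify.
Import Order.TTheory GRing.Theory Num.Theory.
Local Open Scope ring_scope.

Lemma inv_natr_le_ratio {R : numFieldType} {a m f : nat} :
  (0 < a)%N -> (0 < m)%N -> (m <= f)%N -> 1 / f%:R <= a%:R / m%:R :> R.
Proof.
move=> a_gt0 m_gt0 m_le_f; have f_gt0 : (0 < f)%N by lia.
rewrite ler_pdivrMr ?ltr0n // mulrAC ler_pdivlMr ?ltr0n // mul1r -natrM ler_nat.
nia.
Qed.

Lemma inv_natr_eq_ratio {R : numFieldType} {a m f : nat} :
  (0 < a)%N -> (0 < m)%N -> (m <= f)%N ->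
  1 / f%:R = a%:R / m%:R :> R -> a = 1%N /\ m = f.
Proof.
move=> a_gt0 m_gt0 m_le_f /eqP; rewrite eqr_div ?pnatr_eq0 -?lt0n //; last by lia.
by rewrite mul1r -natrM eqr_nat => /eqP; nia.
Qed.

Section Intersecting.
Variables (T : finType) (t : nat).
Implicit Types (F A : {set {set T}}) (X Y : {set T}).

Lemma t_intersecting1 X : t_intersecting t [set X].
Proof.
by apply/forallP=> X1; apply/implyP=> /set1P->; apply/forallP=> X2;
  apply/implyP=> /set1P->; rewrite eqxx.
Qed.

Lemma t_intersecting2 {X Y} : (t <= #|X :&: Y|)%N -> t_intersecting t [set X; Y].
Proof.
move=> tXY; apply/forallP=> X1; apply/implyP=> /set2P X1E.
apply/forallP=> X2; apply/implyP=> /set2P X2E; apply/implyP=> X12.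
by case: X1E X2E X12 => -> [] ->; rewrite ?eqxx // setIC.
Qed.

Lemma fam_plus_sub A : fam_plus A t \subset A.
Proof. by apply/subsetP=> X; rewrite inE => /andP[]. Qed.

Lemma card_fam_plus_minus A : (#|fam_plus A t| + #|fam_minus A t|)%N = #|A|.
Proof.
by rewrite /fam_minus cardsD (setIidPr (fam_plus_sub A)) subnKC
  ?subset_leq_card ?fam_plus_sub.
Qed.

Lemma fam_plusP {A X} :
  X \in fam_plus A t -> forall Y, Y \in A -> Y != X -> (t <= #|X :&: Y|)%N.
Proof.
by rewrite inE => /andP[_ /forallP XA] Y YA YX; have := XA Y; rewrite !inE YX YA.
Qed.

Lemma t_intersecting_setU1_fam_plus {A Y} :
  Y \in A -> t_intersecting t (Y |: fam_plus A t).
Proof.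
move=> YA; apply/forallP=> X1; apply/implyP=> /setU1P X1E.
apply/forallP=> X2; apply/implyP=> /setU1P X2E; apply/implyP=> X12.
case: X1E => [X1Y | X1p].
- case: X2E => [X2Y | X2p]; first by rewrite X1Y X2Y eqxx in X12.
  by rewrite setIC (fam_plusP X2p) // X1Y.
- rewrite (fam_plusP X1p) // 1?eq_sym //.
  by case: X2E => [-> | /(subsetP (fam_plus_sub A))].
Qed.

Lemma leq_card_lmax {F A} :
  A \subset F -> t_intersecting t A -> (#|A| <= lmax F t)%N.
Proof. by move=> sAF tA; apply: leq_bigmax_cond; rewrite inE sAF. Qed.

Lemma lmax_gt0 {F} : F != set0 -> (0 < lmax F t)%N.
Proof.
case/set0Pn=> X XF; rewrite -(cards1 X).
by apply: leq_card_lmax (t_intersecting1 X); rewrite sub1set.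
Qed.

Lemma lmax_le1P F : (lmax F t <= 1)%N <->
  (forall X Y, X \in F -> Y \in F -> X != Y -> (#|X :&: Y| < t)%N).
Proof.
split=> [lmax_le1 X Y XF YF XY | F_sep].
- rewrite ltnNge; apply/negP=> tXY.
  have sXYF : [set X; Y] \subset F by apply/subsetP=> Z /set2P[]->.
  by have := leq_card_lmax sXYF (t_intersecting2 tXY); rewrite cards2 XY; lia.
- apply/bigmax_leqP=> A; rewrite inE => /andP[sAF tA].
  rewrite leqNgt; apply/negP=> /card_gt1P[X [Y [XA YA XY]]].
  have := F_sep X Y (subsetP sAF X XA) (subsetP sAF Y YA) XY.
  move/forallP/(_ X): tA; rewrite XA => /forallP/(_ Y).
  by rewrite YA XY /= ltnNge => ->.
Qed.

Lemma ltn_fam_plus_lmax {F A} :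
  A \subset F -> fam_minus A t != set0 -> (#|fam_plus A t| < lmax F t)%N.
Proof.
move=> sAF /set0Pn[Y]; rewrite inE => /andP[Yp YA].
have sYF : Y |: fam_plus A t \subset F.
  by rewrite subUset sub1set (subsetP sAF) // (subset_trans (fam_plus_sub A)).
by have := leq_card_lmax sYF (t_intersecting_setU1_fam_plus YA); rewrite cardsU1 Yp.
Qed.

Section BetaAt.
Variables (F A : {set {set T}}).
Hypotheses (F_neq0 : F != set0) (sAF : A \subset F).

Let lmax_gt0F := lmax_gt0 F_neq0.
Let cardF_gt0 : (0 < #|F|)%N. Proof. by rewrite card_gt0. Qed.
Let card_fam_minus_le : (#|fam_minus A t| <= #|F|)%N.
Proof. exact: leq_trans (subset_leq_card (subsetDl _ _)) (subset_leq_card sAF). Qed.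

Lemma beta_at_ge : 1 / #|F|%:R <= beta_at F t A.
Proof.
rewrite /beta_at; case: ifPn => [_ | Am_neq0]; first exact: inv_natr_le_ratio.
have lt_plus := ltn_fam_plus_lmax sAF Am_neq0.
rewrite -natrB ?(ltnW lt_plus) //; apply: inv_natr_le_ratio => //.
  by rewrite subn_gt0.
by rewrite card_gt0.
Qed.

Lemma beta_at_eq_lmax_le1 : beta_at F t A = 1 / #|F|%:R -> (lmax F t <= 1)%N.
Proof.
rewrite /beta_at; case: ifPn => [_ /esym | Am_neq0 /esym].
  by case/(inv_natr_eq_ratio lmax_gt0F cardF_gt0 (leqnn _)) => ->.
have lt_plus := ltn_fam_plus_lmax sAF Am_neq0.
have diff_gt0 : (0 < lmax F t - #|fam_plus A t|)%N by rewrite subn_gt0.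
have minus_gt0 : (0 < #|fam_minus A t|)%N by rewrite card_gt0.
rewrite -natrB; last exact: ltnW.
case/(inv_natr_eq_ratio diff_gt0 minus_gt0 card_fam_minus_le) => diff_eq1 minus_eqF.
have := card_fam_plus_minus A; have := subset_leq_card sAF; lia.
Qed.

End BetaAt.

Lemma beta_at_set0 F : beta_at F t set0 = (lmax F t)%:R / #|F|%:R.
Proof. by rewrite /beta_at /fam_minus set0D eqxx. Qed.

Lemma beta_le_beta_at F A : A \subset F -> beta F t <= beta_at F t A.
Proof. by move=> sAF; rewrite /beta (bigD1 A) ?inE //= ge_min lexx. Qed.

Lemma beta_attained F :
  exists2 A : {set {set T}}, A \subset F & beta F t = beta_at F t A.
Proof.
rewrite /beta.
apply: (big_ind (fun b => exists2 A : {set {set T}}, A \subset F & b = beta_at F t A)).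
- by exists set0; rewrite ?sub0set.
- move=> _ _ [A1 sA1F ->] [A2 sA2F ->]; rewrite /Order.min.
  by case: ifP => _; [exists A1 | exists A2].
- by move=> A; rewrite inE => sAF; exists A.
Qed.

End Intersecting.

Theorem proposition3p1 (T : finType) (F : {set {set T}}) (t : nat) :
  (1 <= t)%N -> F != set0 ->
  (1 / #|F|%:R <= beta F t) /\
  (beta F t = 1 / #|F|%:R <->
     (forall A B, A \in F -> B \in F -> A != B -> (#|A :&: B| < t)%N)).
Proof.
move=> _ F_neq0; have [A sAF beta_eq] := beta_attained _ t F.
have beta_ge : 1 / #|F|%:R <= beta F t by rewrite beta_eq beta_at_ge.
split=> //; rewrite -lmax_le1P; split.
  by rewrite beta_eq; apply: beta_at_eq_lmax_le1.
move=> lmax_le1; apply/eqP; rewrite eq_le beta_ge andbT.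
have lmax1 : lmax F t = 1%N by apply/eqP; rewrite eqn_leq lmax_le1 lmax_gt0.
have -> : 1 / #|F|%:R = beta_at F t set0 by rewrite beta_at_set0 lmax1.
exact: beta_le_beta_at (sub0set F).
Qed.
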